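(* Let $n$ and $p$ be positive integers with $p \leq \tfrac{2n}{3} - 1$. Let $\mathcal{G} = (\mathcal{V}, \mathcal{E})$ be a connected undirected graph with vertex set $\mathcal{V} = \{1, \ldots, N\}$, and define $U : \mathsf{St}(p,n)^N \to \mathbb{R}$ by $$U(S_1, \ldots, S_N) = \sum_{\{i,j\} \in \mathcal{E}} \bigl(p - \langle S_i, S_j \rangle\bigr) = \tfrac12 \sum_{\{i,j\}\in\mathcal{E}} \|S_i - S_j\|^2 .$$ Then every (local) minimizer $(S_1,\ldots,S_N)$ of $U$ on $\mathsf{St}(p,n)^N$ belongs to the consensus manifold $$\mathcal{C} = \{(S_i)_{i=1}^N \in \mathsf{St}(p,n)^N \mid S_i = S_j \text{ for all } \{i,j\} \in \mathcal{E}\}.$$ That is, every connected graph is $\mathsf{St}(p,n)$-synchronizing.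
   Context: The compact real Stiefel manifold is $\mathsf{St}(p,n) = \{S \in \mathbb{R}^{n\times p} \mid S^\top S = I_p\}$, viewed as an embedded submanifold of $\mathbb{R}^{n\times p}$ with the Euclidean (Frobenius) inner product $\langle X, Y\rangle = \operatorname{tr}(X^\top Y)$ and norm $\|X\| = \langle X,X\rangle^{1/2}$. A graph $\mathcal{G}$ is called $\mathsf{St}(p,n)$-synchronizing (for the potential $U$ above) if all minimizers of $U$ belong to the consensus manifold $\mathcal{C}$. *)

From mathcomp Require Import all_boot all_order all_algebra.
From mathcomp Require Import reals.
Set Implicit Arguments. Unset Strict Implicit. Unset Printing Implicit Defensive.
Import Order.TTheory GRing.Theory Num.Theory.
Local Open Scope ring_scope.

Definition frob_inner (R : realType) (n p : nat) (X Y : 'M[R]_(n, p)) : R :=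
  \tr (X^T *m Y).
Definition frob_norm2 (R : realType) (n p : nat) (X : 'M[R]_(n, p)) : R :=
  frob_inner X X.

Definition stiefel (R : realType) (n p : nat) (S : 'M[R]_(n, p)) : Prop :=
  S^T *m S = 1%:M.

Definition simple_graph (N : nat) (e : rel 'I_N) : Prop :=
  (forall i j, e i j = e j i) /\ (forall i, ~~ e i i).

Definition graph_connected (N : nat) (e : rel 'I_N) : Prop :=
  forall i j, connect e i j.

Definition potential (R : realType) (n p N : nat) (e : rel 'I_N)
  (S : 'I_N -> 'M[R]_(n, p)) : R :=
  \sum_(i < N) \sum_(j < N | (i < j)%N && e i j) (p%:R - frob_inner (S i) (S j)).

Definition on_stiefel_N (R : realType) (n p N : nat) (S : 'I_N -> 'M[R]_(n, p)) : Prop :=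
  forall i, stiefel (S i).

Definition local_minimizer (R : realType) (n p N : nat) (e : rel 'I_N)
  (S : 'I_N -> 'M[R]_(n, p)) : Prop :=
  on_stiefel_N S /\
  exists eps : R, 0 < eps /\
    forall T : 'I_N -> 'M[R]_(n, p), on_stiefel_N T ->
      \sum_(i < N) frob_norm2 (T i - S i) < eps ->
      potential e S <= potential e T.

Definition consensus (R : realType) (n p N : nat) (e : rel 'I_N)
  (S : 'I_N -> 'M[R]_(n, p)) : Prop :=
  on_stiefel_N S /\ forall i j, e i j -> S i = S j.

(* A local minimizer S of U is critical, and U has nonnegative second variation
   along every curve s |-> (Q_u(s) S_u)_u, where Q_u(s) is the Cayley transform
   of a skew matrix A_u with A_u^3 = -lam_u A_u.  Taking A supported at a single
   vertex i, criticality says that G_i S_i^T is symmetric, G_i being the sum of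
   the neighbours of S_i; this turns the second variation into a sum over edges.
   Let A_u be the rank-two skew matrix with A_u S_u the tangent projection of the
   matrix unit E_kl at S_u.  Averaging over all (k, l) gives
   sum_{edges uv} D(S_u, S_v) <= 0 for an explicit D(S, T) depending only on
   n, p, <S, T> and |S^T T|^2.  Times 4p, D is a sum of three nonnegative terms:
   a Cauchy-Schwarz defect p |S^T T|^2 - <S, T>^2, a multiple of (p - <S, T>)^2,
   and (p - <S, T>)(2n - 3p - 3), which is where p <= 2n/3 - 1 enters.  Hence
   D = 0 on every edge, which forces <S_u, S_v> = p, i.e. S_u = S_v. *)

From mathcomp Require Import all_boot all_order all_algebra.
From mathcomp Require Import boolp classical_sets reals topology normedtype.
From mathcomp Require Import ring lra.
Set Implicit Arguments. Unset Strict Implicit. Unset Printing Implicit Defensive.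
Import Order.TTheory GRing.Theory Num.Theory numFieldNormedType.Exports.
Local Open Scope ring_scope.
Local Open Scope classical_set_scope.

Local Notation "''[' X , Y ]" := (frob_inner X Y) : ring_scope.

Section FrobeniusInner.
Variable R : realType.

Lemma frob_innerE m q (X Y : 'M[R]_(m, q)) :
  '[X, Y] = \sum_(i < m) \sum_(j < q) X i j * Y i j.
Proof.
rewrite /frob_inner /mxtrace exchange_big; apply: eq_bigr => j _.
by rewrite !mxE; apply: eq_bigr => i _; rewrite !mxE.
Qed.

Lemma frob_innerC m q (X Y : 'M[R]_(m, q)) : '[X, Y] = '[Y, X].
Proof. by rewrite /frob_inner -mxtrace_tr trmx_mul trmxK. Qed.

Lemma frob_innerDr m q (X Y Z : 'M[R]_(m, q)) : '[X, Y + Z] = '[X, Y] + '[X, Z].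
Proof. by rewrite /frob_inner mulmxDr mxtraceD. Qed.

Lemma frob_innerDl m q (X Y Z : 'M[R]_(m, q)) : '[Y + Z, X] = '[Y, X] + '[Z, X].
Proof. by rewrite frob_innerC frob_innerDr !(frob_innerC X). Qed.

Lemma frob_innerZr m q a (X Y : 'M[R]_(m, q)) : '[X, a *: Y] = a * '[X, Y].
Proof. by rewrite /frob_inner -scalemxAr mxtraceZ. Qed.

Lemma frob_innerZl m q a (X Y : 'M[R]_(m, q)) : '[a *: X, Y] = a * '[X, Y].
Proof. by rewrite frob_innerC frob_innerZr frob_innerC. Qed.

Lemma frob_innerNr m q (X Y : 'M[R]_(m, q)) : '[X, - Y] = - '[X, Y].
Proof. by rewrite -scaleN1r frob_innerZr mulN1r. Qed.

Lemma frob_innerNl m q (X Y : 'M[R]_(m, q)) : '[- X, Y] = - '[X, Y].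
Proof. by rewrite -scaleN1r frob_innerZl mulN1r. Qed.

Lemma frob_innerBr m q (X Y Z : 'M[R]_(m, q)) : '[X, Y - Z] = '[X, Y] - '[X, Z].
Proof. by rewrite frob_innerDr frob_innerNr. Qed.

Lemma frob_innerBl m q (X Y Z : 'M[R]_(m, q)) : '[Y - Z, X] = '[Y, X] - '[Z, X].
Proof. by rewrite frob_innerDl frob_innerNl. Qed.

Lemma frob_inner0r m q (X : 'M[R]_(m, q)) : '[X, 0] = 0.
Proof. by rewrite /frob_inner mulmx0 mxtrace0. Qed.

Lemma frob_inner0l m q (X : 'M[R]_(m, q)) : '[0, X] = 0.
Proof. by rewrite frob_innerC frob_inner0r. Qed.

Lemma frob_inner_sumr m q I (r : seq I) (P : pred I) (X : 'M[R]_(m, q)) F :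
  '[X, \sum_(i <- r | P i) F i] = \sum_(i <- r | P i) '[X, F i].
Proof.
elim/big_rec2: _ => [|i y1 y2 _ <-]; first exact: frob_inner0r.
exact: frob_innerDr.
Qed.

Lemma frob_inner_mull m k q (A : 'M[R]_(k, m)) (X : 'M[R]_(m, q)) Y :
  '[A *m X, Y] = '[X, A^T *m Y].
Proof. by rewrite /frob_inner trmx_mul mulmxA. Qed.

Lemma frob_inner_mulr m k q (B : 'M[R]_(q, k)) (X : 'M[R]_(m, q)) Y :
  '[X *m B, Y] = '[X, Y *m B^T].
Proof. by rewrite /frob_inner trmx_mul -mulmxA mxtrace_mulC -mulmxA. Qed.

Lemma frob_inner1l m (L : 'M[R]_m) : '[1%:M, L] = \tr L.
Proof. by rewrite /frob_inner trmx1 mul1mx. Qed.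

Lemma frob_inner11 m : '[1%:M : 'M[R]_m, 1%:M] = m%:R.
Proof. by rewrite frob_inner1l mxtrace1. Qed.

Lemma frob_inner_delta m q (a : 'I_m) (b : 'I_q) (Z : 'M[R]_(m, q)) :
  '[delta_mx a b, Z] = Z a b.
Proof.
rewrite frob_innerE (bigD1 a) //= (bigD1 b) //= !mxE !eqxx mul1r.
rewrite big1 ?addr0 => [|j /negbTE jb]; last by rewrite mxE eqxx jb mul0r.
rewrite big1 ?addr0 // => i /negbTE ia; rewrite big1 // => j _.
by rewrite mxE ia mul0r.
Qed.

Lemma trmx_mul_cV n (v w : 'cV[R]_n) : v^T *m w = ('[v, w])%:M.
Proof. by rewrite {1}[v^T *m w]mx11_scalar /frob_inner trace_mx11. Qed.

Lemma frob_inner_ge0 m q (X : 'M[R]_(m, q)) : 0 <= '[X, X].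
Proof. by rewrite frob_innerE; do 2!apply: sumr_ge0 => ? _; exact: sqr_ge0. Qed.

Lemma frob_inner_eq0 m q (X : 'M[R]_(m, q)) : ('[X, X] == 0) = (X == 0).
Proof.
apply/idP/eqP => [|->]; last by rewrite frob_inner0r.
rewrite frob_innerE psumr_eq0 => [/allP X0|i _]; last first.
  by apply: sumr_ge0 => j _; exact: sqr_ge0.
apply/matrixP => i j; apply/eqP; rewrite mxE -sqrf_eq0 expr2.
have /implyP /(_ isT) := X0 i (mem_index_enum _).
rewrite psumr_eq0 => [/allP /(_ j (mem_index_enum _))|k _]; last exact: sqr_ge0.
by rewrite implyTb.
Qed.

End FrobeniusInner.

Section Asymptotics.
Variable R : realType.

Lemma le0_of_le_linear_near0 (x C : R) : (\forall t \near 0^'+, x <= C * t) -> x <= 0.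
Proof.
move=> xC; rewrite leNgt; apply/negP => x0.
have Cp : 0 < `|C| + 1 by rewrite ltr_wpDl.
have : \forall t \near (0 : R)^'+, False.
  near=> t.
  have t0 : 0 < t by near: t; exact: nbhs_right_gt.
  have tx : t * (`|C| + 1) < x.
    by rewrite -ltr_pdivlMr //; near: t; apply: nbhs_right_lt; rewrite divr_gt0.
  have xt : x <= C * t by near: t.
  have : C <= `|C| := ler_norm C.
  nra.
by move=> /filter_ex [].
Unshelve. all: by end_near. Qed.

Lemma near0_quadratic_le_cubic (a b K : R) :
  (\forall s \near (0 : R), a * s + b * s ^+ 2 <= K * `|s| ^+ 3) -> a = 0 /\ b <= 0.
Proof.
move=> /nbhs_norm0P [r /= r0 abK].
have bound t : 0 < t -> t < r -> `|a| + b * t <= K * t ^+ 2.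
  move=> t0 tr.
  have abt : a * t + b * t ^+ 2 <= K * t ^+ 3.
    by have := abK t; rewrite /= gtr0_norm //; apply.
  have abNt : a * (- t) + b * t ^+ 2 <= K * t ^+ 3.
    by have := abK (- t); rewrite /= normrN sqrrN gtr0_norm //; apply.
  by have [a0|a0] := leP 0 a; [rewrite ger0_norm | rewrite ltr0_norm]; nra.
have near_bound : \forall t \near (0 : R)^'+, `|a| + b * t <= K * t ^+ 2 /\ 0 < t < 1.
  near=> t; have t0 : 0 < t by near: t; exact: nbhs_right_gt.
  have t1 : t < Num.min r 1 by near: t; apply: nbhs_right_lt; rewrite lt_min r0 ltr01.
  move: t1; rewrite lt_min => /andP[tr t1]; split; first exact: bound.
  by rewrite t0 t1.
have b0 : b <= 0.
  apply: (@le0_of_le_linear_near0 b K); apply: filterS near_bound.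
  move=> t [+ /andP[t0 _]].
  have : 0 <= `|a| := normr_ge0 a.
  nra.
split => //; apply/eqP; rewrite -normr_le0.
apply: (@le0_of_le_linear_near0 _ (`|K| - b)); apply: filterS near_bound.
move=> t [+ /andP[t0 t1]].
have : K * t ^+ 2 <= `|K| * t.
  rewrite expr2 mulrA ler_pM2r //; apply: le_trans (ler_norm _) _.
  by rewrite normrM (gtr0_norm t0) ler_piMr // ltW.
lra.
Unshelve. all: by end_near. Qed.

Definition bigO0 (k : nat) (g : R -> R) :=
  exists K : R, \forall s \near (0 : R), `|g s| <= K * `|s| ^+ k.

Lemma bigO0_eq k (g h : R -> R) :
  (\forall s \near (0 : R), g s = h s) -> bigO0 k h -> bigO0 k g.
Proof. by move=> gh [K hK]; exists K; apply: (filterS2 _ _ gh hK) => s ->. Qed.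

Lemma bigO0_ext k (g h : R -> R) : g =1 h -> bigO0 k h -> bigO0 k g.
Proof. by move=> /funext ->. Qed.

Lemma bigO0_cst (c : R) : bigO0 0 (fun=> c).
Proof. by exists `|c|; near=> s; rewrite expr0 mulr1. Unshelve. all: by end_near. Qed.

Lemma bigO0X k : bigO0 k (fun s => s ^+ k).
Proof. by exists 1; near=> s; rewrite mul1r normrX. Unshelve. all: by end_near. Qed.

Lemma bigO0_id : bigO0 1 id.
Proof. exact: bigO0_ext (fun s => esym (expr1 s)) (bigO0X 1). Qed.

Lemma bigO0D k (g h : R -> R) :
  bigO0 k g -> bigO0 k h -> bigO0 k (fun s => g s + h s).
Proof.
move=> [K1 gK1] [K2 hK2]; exists (K1 + K2); apply: (filterS2 _ _ gK1 hK2) => s gs hs.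
by rewrite mulrDl (le_trans (ler_normD _ _)) // lerD.
Qed.

Lemma bigO0M k m (g h : R -> R) :
  bigO0 k g -> bigO0 m h -> bigO0 (k + m) (fun s => g s * h s).
Proof.
move=> [K1 gK1] [K2 hK2]; exists (K1 * K2); apply: (filterS2 _ _ gK1 hK2) => s gs hs.
rewrite normrM exprD mulrACA; exact: ler_pM.
Qed.

Lemma bigO0Ml k (c : R) (g : R -> R) : bigO0 k g -> bigO0 k (fun s => c * g s).
Proof. exact: bigO0M (bigO0_cst c). Qed.

Lemma bigO0_le m k (g : R -> R) : (m <= k)%N -> bigO0 k g -> bigO0 m g.
Proof.
move=> mk [K gK]; exists `|K|; near=> s.
have gs : `|g s| <= K * `|s| ^+ k by near: s.
have s1 : `|s| < 1 by near: s; exact: (@nbhs0_lt R R^o).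
apply: (le_trans gs); apply: (le_trans (ler_norm _)).
by rewrite normrM normrX normr_id ler_wpM2l // ler_wiXn2l // ltW.
Unshelve. all: by end_near. Qed.

Lemma bigO0_sum k I (r : seq I) (P : pred I) (F : I -> R -> R) :
  (forall i, bigO0 k (F i)) -> bigO0 k (fun s => \sum_(i <- r | P i) F i s).
Proof.
move=> FO; elim: r => [|i r IHr].
  by exists 0; near=> s; rewrite big_nil normr0 mul0r.
apply: bigO0_ext (fun s => big_cons _ _ _ _ _ _) _.
by case: (P i) => //; exact: bigO0D.
Unshelve. all: by end_near. Qed.

Lemma bigO0_lt k (g : R -> R) (c : R) : bigO0 k.+1 g -> 0 < c ->
  \forall s \near (0 : R), g s < c.
Proof.
move=> /(bigO0_le (ltn0Sn k)) [K gK] c0.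
have K1 : 0 < `|K| + 1 by rewrite ltr_wpDl.
near=> s.
have gs : `|g s| <= K * `|s| ^+ 1 by near: s.
have sc : `|s| < c / (`|K| + 1) by near: s; exact: (@nbhs0_lt R R^o _ (divr_gt0 c0 K1)).
rewrite ltr_pdivlMr // in sc.
have : K * `|s| <= `|K| * `|s| by rewrite ler_wpM2r // ler_norm.
rewrite expr1 in gs; have := ler_norm (g s); have : 0 <= `|s| := normr_ge0 s.
nra.
Unshelve. all: by end_near. Qed.

Lemma local_max_expansion (g : R -> R) c0 c1 c2 :
  bigO0 3 (fun s => g s - (c0 + s * c1 + s ^+ 2 * c2)) ->
  (\forall s \near (0 : R), g s <= c0) -> c1 = 0 /\ c2 <= 0.
Proof.
move=> [K gK] gmax; apply: (@near0_quadratic_le_cubic _ _ K).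
apply: (filterS2 _ _ gK gmax) => s gs gc0.
by have := ler_norm (- (g s - (c0 + s * c1 + s ^+ 2 * c2))); rewrite normrN; lra.
Qed.

End Asymptotics.

Arguments bigO0_id {R}.
Arguments bigO0X {R} k.

Section MatrixBigO0.
Variable R : realType.

Definition mx_bigO0 k m q (G : R -> 'M[R]_(m, q)) :=
  forall i j, bigO0 k (fun s => G s i j).

Lemma mx_bigO0_ext k m q (G H : R -> 'M[R]_(m, q)) :
  G =1 H -> mx_bigO0 k H -> mx_bigO0 k G.
Proof. by move=> /funext ->. Qed.

Lemma mx_bigO0_cst m q (Z : 'M[R]_(m, q)) : mx_bigO0 0 (fun=> Z).
Proof. by move=> i j; exact: bigO0_cst. Qed.

Lemma mx_bigO0D k m q (G H : R -> 'M[R]_(m, q)) :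
  mx_bigO0 k G -> mx_bigO0 k H -> mx_bigO0 k (fun s => G s + H s).
Proof. by move=> GO HO i j; apply: bigO0_ext (bigO0D (GO i j) (HO i j)) => s; rewrite mxE. Qed.

Lemma mx_bigO0Z k m q (g : R -> R) (Z : 'M[R]_(m, q)) :
  bigO0 k g -> mx_bigO0 k (fun s => g s *: Z).
Proof.
move=> gO i j; apply: bigO0_ext (bigO0Ml (Z i j) gO) => s.
by rewrite mxE mulrC.
Qed.

Lemma mx_bigO0_le k' k m q (G : R -> 'M[R]_(m, q)) :
  (k' <= k)%N -> mx_bigO0 k G -> mx_bigO0 k' G.
Proof. by move=> k'k GO i j; exact: bigO0_le k'k (GO i j). Qed.

Lemma bigO0_frob_inner k1 k2 m q (G H : R -> 'M[R]_(m, q)) :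
  mx_bigO0 k1 G -> mx_bigO0 k2 H -> bigO0 (k1 + k2) (fun s => '[G s, H s]).
Proof.
move=> GO HO; apply: bigO0_ext (fun s => frob_innerE (G s) (H s)) _.
by do 2!apply: bigO0_sum => ?; exact: bigO0M.
Qed.

Lemma mx_bigO0_quadratic m q (S X Y : 'M[R]_(m, q)) :
  mx_bigO0 0 (fun s => S + s *: X + s ^+ 2 *: Y).
Proof.
apply: mx_bigO0D; first apply: mx_bigO0D.
- exact: mx_bigO0_cst.
- by apply: mx_bigO0Z; exact: bigO0_le (leq0n 1) bigO0_id.
- by apply: mx_bigO0Z; exact: bigO0_le (leq0n 2) (bigO0X 2).
Qed.

Definition jet2 m q (T : R -> 'M[R]_(m, q)) (S X Y : 'M[R]_(m, q)) :=
  mx_bigO0 3 (fun s => T s - (S + s *: X + s ^+ 2 *: Y)).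

Lemma jet2_frob_inner m q (T T' : R -> 'M[R]_(m, q)) S X Y S' X' Y' :
  jet2 T S X Y -> jet2 T' S' X' Y' ->
  bigO0 3 (fun s => '[T s, T' s] - ('[S, S'] + s * ('[X, S'] + '[S, X'])
    + s ^+ 2 * ('[Y, S'] + '[X, X'] + '[S, Y']))).
Proof.
set P := fun s => S + s *: X + s ^+ 2 *: Y; set P' := fun s => S' + s *: X' + s ^+ 2 *: Y'.
move=> TO T'O.
apply: (bigO0_ext (h := fun s => s ^+ 3 * ('[X, Y'] + '[Y, X']) + s ^+ 4 * '[Y, Y']
  + '[P s, T' s - P' s] + '[T s - P s, P' s] + '[T s - P s, T' s - P' s])).
  move=> s; rewrite /P /P'.
  rewrite !(frob_innerNl, frob_innerNr, frob_innerDl, frob_innerDr, frob_innerZl,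
    frob_innerZr).
  ring.
have PO := mx_bigO0_quadratic S X Y; have P'O := mx_bigO0_quadratic S' X' Y'.
apply: bigO0D; last exact: bigO0_le (bigO0_frob_inner TO T'O).
apply: bigO0D; last exact: bigO0_frob_inner TO P'O.
apply: bigO0D; last exact: bigO0_frob_inner PO T'O.
apply: bigO0D; last exact: bigO0_le (bigO0M (bigO0X 4) (bigO0_cst _)).
exact: bigO0M (bigO0X 3) (bigO0_cst _).
Qed.

Lemma jet2_sub m q (T : R -> 'M[R]_(m, q)) S X Y :
  jet2 T S X Y -> mx_bigO0 1 (fun s => T s - S).
Proof.
move=> TO; apply: (mx_bigO0_ext (H := fun s => s *: X + s ^+ 2 *: Y
  + (T s - (S + s *: X + s ^+ 2 *: Y)))).
  by move=> s; apply/matrixP => i j; rewrite !mxE; ring.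
apply: mx_bigO0D; last exact: mx_bigO0_le _ TO.
apply: mx_bigO0D; apply: mx_bigO0Z; first exact: bigO0_id.
exact: bigO0_le _ (bigO0X 2).
Qed.

End MatrixBigO0.

Section CayleyCurve.
Variable R : realType.
Implicit Types (lam s : R).

Definition cayley_den lam s : R := 4 / (4 + s ^+ 2 * lam).

(* The Cayley transform (1 - s A / 2)^-1 (1 + s A / 2) of a skew matrix A with
   A^3 = - lam A, in closed form. *)
Definition cayley n (A : 'M[R]_n) lam s : 'M[R]_n :=
  1%:M + (s * cayley_den lam s) *: A + (s ^+ 2 / 2 * cayley_den lam s) *: (A *m A).

Lemma cayley_den_sub1 lam s : 4 + s ^+ 2 * lam != 0 ->
  cayley_den lam s - 1 = - (s ^+ 2 * lam / 4) * cayley_den lam s.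
Proof. by move=> den0; rewrite /cayley_den; field. Qed.

Lemma cayley_orthogonal n (A : 'M[R]_n) lam s :
  A^T = - A -> A *m A *m A = - lam *: A -> 4 + s ^+ 2 * lam != 0 ->
  (cayley A lam s)^T *m cayley A lam s = 1%:M.
Proof.
move=> skA cubA den0; rewrite /cayley.
set a := s * _; set b := s ^+ 2 / 2 * _.
have -> : (1%:M + a *: A + b *: (A *m A))^T = 1%:M - a *: A + b *: (A *m A).
  by rewrite !linearD !linearZ /= trmx1 trmx_mul skA mulmxN mulNmx opprK scalerN.
rewrite !(mulmxDl, mulmxDr, mulmxBl, mul1mx, mulmx1) ?(mulNmx, mulmxN).
rewrite -?(scalemxAl, scalemxAr) ?mulmxA cubA -?scalemxAl.
move: (A *m A) => A2; apply/matrixP => i j; rewrite !mxE /a /b /cayley_den.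
by field.
Qed.

Lemma cayley_stiefel n p (A : 'M[R]_n) lam s (S : 'M[R]_(n, p)) :
  A^T = - A -> A *m A *m A = - lam *: A -> 4 + s ^+ 2 * lam != 0 ->
  stiefel S -> stiefel (cayley A lam s *m S).
Proof.
move=> skA cubA den0 SS.
by rewrite /stiefel trmx_mul mulmxA -(mulmxA S^T) cayley_orthogonal // mulmx1.
Qed.

Lemma near0_cayley_den_ge lam : \forall s \near (0 : R), 2 <= 4 + s ^+ 2 * lam.
Proof.
have lam1 : 0 < `|lam| + 1 by rewrite ltr_wpDl.
near=> s.
have s1 : `|s| < 1 by near: s; exact: (@nbhs0_lt R R^o).
have slam : `|s| < (`|lam| + 1)^-1.
  by near: s; apply: (@nbhs0_lt R R^o); rewrite invr_gt0.
rewrite -div1r ltr_pdivlMr // in slam.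
have s2 : s ^+ 2 <= `|s|.
  by rewrite -[s ^+ 2]ger0_norm ?sqr_ge0 // normrX expr2 ler_piMr // ltW.
have : - lam <= `|lam| by rewrite -normrN ler_norm.
have : 0 <= s ^+ 2 := sqr_ge0 s.
nra.
Unshelve. all: by end_near. Qed.

Lemma bigO0_cayley_den lam : bigO0 0 (cayley_den lam).
Proof.
exists 2; apply: filterS (near0_cayley_den_ge lam) => s den.
rewrite expr0 mulr1 /cayley_den ger0_norm ?divr_ge0 //; last lra.
by rewrite ler_pdivrMr; lra.
Qed.

Lemma bigO0_cayley_den_sub1 lam : bigO0 2 (fun s => cayley_den lam s - 1).
Proof.
apply: (@bigO0_eq _ _ _ (fun s => s ^+ 2 * (- (lam / 4) * cayley_den lam s))).
  apply: filterS (near0_cayley_den_ge lam) => s den.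
  have den0 : 4 + s ^+ 2 * lam != 0 by rewrite gt_eqF //; lra.
  by rewrite cayley_den_sub1 //; ring.
exact: bigO0M (bigO0X 2) (bigO0Ml _ (bigO0_cayley_den lam)).
Qed.

Lemma cayley_jet2 n p (A : 'M[R]_n) lam (S : 'M[R]_(n, p)) :
  jet2 (fun s => cayley A lam s *m S) S (A *m S) ((1 / 2) *: (A *m A *m S)).
Proof.
apply: (@mx_bigO0_ext _ _ _ _ _ (fun s =>
  (s * (cayley_den lam s - 1)) *: (A *m S)
  + (s ^+ 2 / 2 * (cayley_den lam s - 1)) *: (A *m A *m S))).
  move=> s; rewrite /cayley !mulmxDl mul1mx -!scalemxAl.
  by move: (A *m S) (A *m A *m S) => X Y; apply/matrixP => i j; rewrite !mxE; ring.
have dO := bigO0_cayley_den_sub1 lam.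
apply: mx_bigO0D; apply: mx_bigO0Z; first exact: bigO0M bigO0_id dO.
exact: bigO0_le _ (bigO0M (bigO0M (bigO0X 2) (bigO0_cst _)) dO).
Qed.

End CayleyCurve.

Section Wedge.
Variable R : realType.

Definition wedge n (x y : 'cV[R]_n) : 'M[R]_n := x *m y^T - y *m x^T.

Lemma mulmx_outer n (u v w : 'cV[R]_n) : u *m v^T *m w = '[v, w] *: u.
Proof. by rewrite -mulmxA trmx_mul_cV mul_mx_scalar. Qed.

Lemma trmx_wedge n (x y : 'cV[R]_n) : (wedge x y)^T = - wedge x y.
Proof. by rewrite /wedge linearB /= !trmx_mul !trmxK opprB. Qed.

Lemma wedge_cube n (x y : 'cV[R]_n) :
  wedge x y *m wedge x y *m wedge x y =
  - ('[x, x] * '[y, y] - '[x, y] ^+ 2) *: wedge x y.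
Proof.
set A := wedge x y.
have Ax : A *m x = '[x, y] *: x - '[x, x] *: y.
  by rewrite /A /wedge mulmxBl !mulmx_outer frob_innerC.
have Ay : A *m y = '[y, y] *: x - '[x, y] *: y.
  by rewrite /A /wedge mulmxBl !mulmx_outer.
have AAx : A *m (A *m x) = ('[x, y] ^+ 2 - '[x, x] * '[y, y]) *: x.
  rewrite Ax mulmxBr -!scalemxAr Ax Ay.
  by apply/matrixP => i j; rewrite !mxE; ring.
have AAy : A *m (A *m y) = ('[x, y] ^+ 2 - '[x, x] * '[y, y]) *: y.
  rewrite Ay mulmxBr -!scalemxAr Ax Ay.
  by apply/matrixP => i j; rewrite !mxE; ring.
rewrite -mulmxA {2}/A /wedge !mulmxBr !mulmxA -(mulmxA A A x) -(mulmxA A A y).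
rewrite AAx AAy -!scalemxAl /A /wedge.
by apply/matrixP => i j; rewrite !mxE; ring.
Qed.

Lemma wedge_delta n (a b : 'I_n) :
  wedge (delta_mx a 0) (delta_mx b 0) = delta_mx a b - delta_mx b a :> 'M[R]_n.
Proof. by rewrite /wedge !trmx_delta !mul_delta_mx. Qed.

End Wedge.

Section Variations.
Variable R : realType.
Variables (N n p : nat) (e : rel 'I_N).
Hypothesis e_simple : simple_graph e.
Local Notation config := ('I_N -> 'M[R]_(n, p)).

Definition edge_inner (T : config) := \sum_(u < N) \sum_(v < N | e u v) '[T u, T v].

Definition first_variation (S X : config) :=
  \sum_(u < N) \sum_(v < N | e u v) ('[X u, S v] + '[S u, X v]).

Definition second_variation (S X Y : config) :=
  \sum_(u < N) \sum_(v < N | e u v) ('[Y u, S v] + '[X u, X v] + '[S u, Y v]).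

Lemma sum_edges_swap (f : 'I_N -> 'I_N -> R) :
  \sum_(u < N) \sum_(v < N | e u v) f u v = \sum_(u < N) \sum_(v < N | e u v) f v u.
Proof.
rewrite (exchange_big_dep xpredT) //=; apply: eq_bigr => u _.
by apply: eq_bigl => v; case: e_simple => -> _.
Qed.

Lemma sum_edges_half (f : 'I_N -> 'I_N -> R) : (forall u v, f u v = f v u) ->
  \sum_(u < N) \sum_(v < N | e u v) f u v =
  2 * \sum_(u < N) \sum_(v < N | (u < v)%N && e u v) f u v.
Proof.
case: e_simple => _ e_irr fC.
have split_lt u : \sum_(v < N | e u v) f u v =
    \sum_(v < N | (u < v)%N && e u v) f u v + \sum_(v < N | (v < u)%N && e u v) f u v.
  rewrite (bigID (fun v : 'I_N => (u < v)%N)) /=; congr (_ + _); apply: eq_bigl => v.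
    by rewrite andbC.
  rewrite andbC; case: (ltngtP u v) => [| |/val_inj <-] /=; rewrite ?andbF ?andbT //.
  exact/negbTE/e_irr.
under eq_bigr do rewrite split_lt.
rewrite big_split /= (exchange_big_dep xpredT) //= mulr2n mulrDl mul1r; congr (_ + _).
apply: eq_bigr => u _; apply: eq_big => v; last by move=> _; exact: fC.
by case: e_simple => -> _.
Qed.

Lemma le_sum_edges (f : 'I_N -> 'I_N -> R) i j : (forall u v, 0 <= f u v) -> e i j ->
  f i j <= \sum_(u < N) \sum_(v < N | e u v) f u v.
Proof.
move=> f_ge0 eij; rewrite (bigD1 i) //= (bigD1 j) //= -addrA lerDl.
by apply: addr_ge0; apply: sumr_ge0 => // u _; apply: sumr_ge0.
Qed.

Lemma sum_edges_exchange m q (f : 'I_N -> 'I_N -> 'I_m -> 'I_q -> R) :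
  \sum_(u < N) \sum_(v < N | e u v) \sum_(k < m) \sum_(l < q) f u v k l =
  \sum_(k < m) \sum_(l < q) \sum_(u < N) \sum_(v < N | e u v) f u v k l.
Proof.
under eq_bigr do rewrite (exchange_big_dep xpredT) //=.
rewrite exchange_big; apply: eq_bigr => k _.
under eq_bigr do rewrite (exchange_big_dep xpredT) //=.
rewrite exchange_big; apply: eq_bigr => l _; apply: eq_bigr => u _.
by apply: eq_bigl => v; rewrite !andbT.
Qed.

Lemma potentialE (T : config) : potential e T =
  \sum_(u < N) \sum_(v < N | (u < v)%N && e u v) p%:R - edge_inner T / 2.
Proof.
rewrite /potential; under eq_bigr do rewrite sumrB.
rewrite sumrB /edge_inner sum_edges_half; last by move=> u v; exact: frob_innerC.
by congr (_ - _); field.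
Qed.

Lemma local_minimizer_jet2 (S X Y : config) (T : R -> config) :
  local_minimizer e S -> (\forall s \near (0 : R), on_stiefel_N (T s)) ->
  (forall u, jet2 (T^~ u) (S u) (X u) (Y u)) ->
  first_variation S X = 0 /\ second_variation S X Y <= 0.
Proof.
move=> [_ [eps [eps0 Smin]]] Tst TO.
apply: (@local_max_expansion _ (fun s => edge_inner (T s)) (edge_inner S)).
  apply: (bigO0_ext (h := fun s => \sum_(u < N) \sum_(v < N | e u v)
    ('[T s u, T s v] - ('[S u, S v] + s * ('[X u, S v] + '[S u, X v])
      + s ^+ 2 * ('[Y u, S v] + '[X u, X v] + '[S u, Y v]))))).
    move=> s; rewrite /edge_inner /first_variation /second_variation.
    rewrite !mulr_sumr -!big_split -sumrB; apply: eq_bigr => u _.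
    by rewrite !mulr_sumr -!big_split -sumrB.
  by do 2!apply: bigO0_sum => ?; exact: jet2_frob_inner.
have Tclose : \forall s \near (0 : R), \sum_(u < N) frob_norm2 (T s u - S u) < eps.
  apply: (@bigO0_lt _ 1) eps0; apply: bigO0_sum => u.
  exact: bigO0_frob_inner (jet2_sub (TO u)) (jet2_sub (TO u)).
apply: (filterS2 _ _ Tst Tclose) => s Ts_st Ts_close.
by have := Smin _ Ts_st Ts_close; rewrite !potentialE; lra.
Qed.

Lemma local_minimizer_skew_variation (S : config) (A : 'I_N -> 'M[R]_n)
    (lam : 'I_N -> R) :
  local_minimizer e S -> (forall u, (A u)^T = - A u) ->
  (forall u, A u *m A u *m A u = - lam u *: A u) ->
  first_variation S (fun u => A u *m S u) = 0 /\
  second_variation S (fun u => A u *m S u) (fun u => (1 / 2) *: (A u *m A u *m S u))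
    <= 0.
Proof.
move=> Smin skA cubA; apply: (local_minimizer_jet2
  (T := fun s u => cayley (A u) (lam u) s *m S u)) => //; last first.
  by move=> u; exact: cayley_jet2.
have den : \forall s \near (0 : R), forall u, 2 <= 4 + s ^+ 2 * lam u.
  exact: (filter_forall _ (fun u => near0_cayley_den_ge (lam u))).
apply: filterS den => s den u; apply: cayley_stiefel => //; last by case: Smin.
by rewrite gt_eqF // (lt_le_trans _ (den u)).
Qed.

Definition nbr_sum (S : config) (i : 'I_N) := \sum_(v < N | e i v) S v.

Lemma first_variation_single (S X : config) i : (forall u, u != i -> X u = 0) ->
  first_variation S X = 2 * '[X i, nbr_sum S i].
Proof.
move=> Xi; rewrite /first_variation; under eq_bigr do rewrite big_split.
rewrite big_split /= [E in _ + E]sum_edges_swap.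
under [E in _ + E]eq_bigr do under eq_bigr do rewrite frob_innerC.
rewrite -mulr2n (bigD1 i) //= [E in _ + E]big1 ?addr0.
  by rewrite frob_inner_sumr mulr_natl.
by move=> u ui; rewrite Xi // big1 // => v _; rewrite frob_inner0l.
Qed.

Lemma local_minimizer_nbr_sym (S : config) i : local_minimizer e S ->
  (nbr_sum S i *m (S i)^T)^T = nbr_sum S i *m (S i)^T.
Proof.
move=> Smin; set Z := _ *m _; apply/matrixP => a b; rewrite mxE.
(* Rotate S_i alone in the coordinate plane (a, b). *)
pose x : 'cV[R]_n := delta_mx a 0; pose y : 'cV[R]_n := delta_mx b 0.
pose A u := if u == i then wedge x y else 0.
pose lam u := if u == i then '[x, x] * '[y, y] - '[x, y] ^+ 2 else 0.
have [] := @local_minimizer_skew_variation S A lam Smin.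
- by move=> u; rewrite /A; case: (u == i); rewrite ?trmx_wedge ?trmx0 ?oppr0.
- move=> u; rewrite /A /lam; case: (u == i); first exact: wedge_cube.
  by rewrite !mul0mx scaler0.
rewrite (@first_variation_single _ _ i) => [|u /negbTE ui]; last first.
  by rewrite /A ui mul0mx.
move=> /eqP; rewrite mulf_eq0 pnatr_eq0 /= /A eqxx frob_inner_mulr -/Z.
by rewrite wedge_delta frob_innerBl !frob_inner_delta subr_eq0 => /eqP.
Qed.

Lemma local_minimizer_nbr_sum (S : config) i : local_minimizer e S ->
  nbr_sum S i = S i *m ((nbr_sum S i)^T *m S i).
Proof.
move=> Smin; have := local_minimizer_nbr_sym i Smin.
rewrite trmx_mul trmxK => sym; case: Smin => SS _.
by rewrite mulmxA sym -mulmxA (SS i) mulmx1.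
Qed.

Lemma second_variation_skew (S : config) (A : 'I_N -> 'M[R]_n) :
  (forall u, (A u)^T = - A u) ->
  (forall u, nbr_sum S u = S u *m ((nbr_sum S u)^T *m S u)) ->
  let X u := A u *m S u in
  second_variation S X (fun u => (1 / 2) *: (A u *m A u *m S u)) =
  \sum_(u < N) \sum_(v < N | e u v) ('[X u, X v] - '[X u, X u *m ((S v)^T *m S u)]).
Proof.
move=> skA Scrit X; set Y := fun u => _ *: _.
have YS : \sum_(u < N) \sum_(v < N | e u v) '[Y u, S v] =
    - (1 / 2) * \sum_(u < N) \sum_(v < N | e u v) '[X u, X u *m ((S v)^T *m S u)].
  rewrite mulr_sumr; apply: eq_bigr => u _.
  rewrite -frob_inner_sumr -/(nbr_sum S u) Scrit frob_innerZl -mulmxA.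
  rewrite frob_inner_mull skA mulNmx frob_innerNr (mulmxA (A u)) -/(X u).
  rewrite /nbr_sum [(\sum_(v < N | e u v) S v)^T]raddf_sum mulmx_suml mulmx_sumr.
  by rewrite frob_inner_sumr mulrN mulNr.
have SY : \sum_(u < N) \sum_(v < N | e u v) '[S u, Y v] =
    \sum_(u < N) \sum_(v < N | e u v) '[Y u, S v].
  by rewrite sum_edges_swap; under eq_bigr do under eq_bigr do rewrite frob_innerC.
rewrite /second_variation; under eq_bigr do rewrite !big_split.
rewrite !big_split /= SY YS; under [RHS]eq_bigr do rewrite sumrB.
by rewrite sumrB; field.
Qed.

End Variations.

Section DeltaSums.
Variable R : realType.

Lemma sum2_split m n (f g : 'I_m -> 'I_n -> R) :
  \sum_(k < m) \sum_(l < n) (f k l + g k l) =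
  \sum_(k < m) \sum_(l < n) f k l + \sum_(k < m) \sum_(l < n) g k l.
Proof. by rewrite -big_split; apply: eq_bigr => k _; rewrite big_split. Qed.

Lemma mulr_sum2r m n c (f : 'I_m -> 'I_n -> R) :
  c * \sum_(k < m) \sum_(l < n) f k l = \sum_(k < m) \sum_(l < n) c * f k l.
Proof. by rewrite mulr_sumr; apply: eq_bigr => k _; rewrite mulr_sumr. Qed.

Lemma mulmx_delta m n p q (A : 'M[R]_(m, n)) (B : 'M[R]_(p, q)) k l :
  A *m delta_mx k l *m B = col k A *m row l B.
Proof. by rewrite -(mul_delta_mx (0 : 'I_1)) colE rowE !mulmxA. Qed.

Lemma frob_inner_outer m q (x x' : 'cV[R]_m) (y y' : 'rV[R]_q) :
  '[x *m y, x' *m y'] = '[x, x'] * '[y, y'].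
Proof. by rewrite frob_inner_mull mulmxA trmx_mul_cV mul_scalar_mx frob_innerZr. Qed.

Lemma frob_inner_col m n1 n2 (A : 'M[R]_(m, n1)) (C : 'M[R]_(m, n2)) k l :
  '[col k A, col l C] = (A^T *m C) k l.
Proof. by rewrite frob_innerE !mxE; apply: eq_bigr => i _; rewrite big_ord1 !mxE. Qed.

Lemma frob_inner_row m1 m2 n (B : 'M[R]_(m1, n)) (D : 'M[R]_(m2, n)) k l :
  '[row k B, row l D] = (B *m D^T) k l.
Proof. by rewrite frob_innerE big_ord1 !mxE; apply: eq_bigr => i _; rewrite !mxE. Qed.

Lemma sum_frob_inner_delta m n p q (A C : 'M[R]_(m, n)) (B D : 'M[R]_(p, q)) :
  \sum_(k < n) \sum_(l < p) '[A *m delta_mx k l *m B, C *m delta_mx k l *m D] =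
  '[A, C] * '[B, D].
Proof.
under eq_bigr do under eq_bigr do
  rewrite !mulmx_delta frob_inner_outer frob_inner_col frob_inner_row.
have -> : '[B, D] = \tr (B *m D^T) by rewrite mxtrace_mulC -mxtrace_tr trmx_mul trmxK.
rewrite /frob_inner {2}/mxtrace big_distrl /=.
by apply: eq_bigr => k _; rewrite mulr_sumr.
Qed.

Lemma sum_frob_inner_delta_tr m n p q (A : 'M[R]_(m, n)) (B : 'M[R]_(p, q))
    (C : 'M[R]_(m, p)) (D : 'M[R]_(n, q)) :
  \sum_(k < n) \sum_(l < p) '[A *m delta_mx k l *m B, C *m (delta_mx k l)^T *m D] =
  \tr (A^T *m C *m (B *m D^T)).
Proof.
under eq_bigr do under eq_bigr do
  rewrite trmx_delta !mulmx_delta frob_inner_outer frob_inner_col frob_inner_row.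
by rewrite /mxtrace; apply: eq_bigr => k _; rewrite mxE.
Qed.

Lemma sum_frob_inner_tr_delta m n p q (A : 'M[R]_(m, n)) (B : 'M[R]_(p, q))
    (C : 'M[R]_(m, p)) (D : 'M[R]_(n, q)) :
  \sum_(k < n) \sum_(l < p) '[C *m (delta_mx k l)^T *m D, A *m delta_mx k l *m B] =
  \tr (A^T *m C *m (B *m D^T)).
Proof.
rewrite -sum_frob_inner_delta_tr.
by apply: eq_bigr => k _; apply: eq_bigr => l _; exact: frob_innerC.
Qed.

Lemma sum_frob_inner_tr_tr m n p q (A C : 'M[R]_(m, p)) (B D : 'M[R]_(n, q)) :
  \sum_(k < n) \sum_(l < p)
    '[A *m (delta_mx k l)^T *m B, C *m (delta_mx k l)^T *m D] = '[A, C] * '[B, D].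
Proof.
rewrite exchange_big /= -sum_frob_inner_delta.
by apply: eq_bigr => l _; apply: eq_bigr => k _; rewrite !trmx_delta.
Qed.

End DeltaSums.

Section TangentProjection.
Variable R : realType.
Variables n p : nat.
Local Notation "1_ m" := (1%:M : 'M[R]_m) (at level 0, m at level 0, format "1_ m").

(* Orthogonal projection onto the tangent space [{W | S^T W is skew}] of St(p, n) at S. *)
Definition tangent_proj (S W : 'M[R]_(n, p)) : 'M[R]_(n, p) :=
  W - (1 / 2) *: (S *m (S^T *m W)) - (1 / 2) *: (S *m (W^T *m S)).

Lemma sum_tangent_proj_inner (S T : 'M[R]_(n, p)) (L : 'M[R]_p) :
  \sum_(k < n) \sum_(l < p)
    '[tangent_proj S (delta_mx k l), tangent_proj T (delta_mx k l) *m L] =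
  n%:R * \tr L
  - 1 / 2 * (\tr (T *m T^T) * \tr L)
  - 1 / 2 * \tr (T *m (T *m L)^T)
  - 1 / 2 * (\tr (S *m S^T) * \tr L)
  + 1 / 4 * ('[S *m S^T, T *m T^T] * \tr L)
  + 1 / 4 * \tr ((S *m S^T)^T *m T *m (T *m L)^T)
  - 1 / 2 * \tr (S *m (L *m S^T))
  + 1 / 4 * \tr ((T *m T^T)^T *m S *m (L *m S^T))
  + 1 / 4 * ('[S, T] * '[S, T *m L]).
Proof.
have PS W : tangent_proj S W =
    1_n *m W *m 1_p - (1 / 2) *: (S *m S^T *m W *m 1_p) - (1 / 2) *: (S *m W^T *m S).
  by rewrite /tangent_proj !mulmx1 mul1mx !mulmxA.
have PTL W : tangent_proj T W *m L =
    1_n *m W *m L - (1 / 2) *: (T *m T^T *m W *m L) - (1 / 2) *: (T *m W^T *m (T *m L)).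
  by rewrite /tangent_proj mul1mx !mulmxBl -!scalemxAl !mulmxA.
have expand k l :
    '[tangent_proj S (delta_mx k l), tangent_proj T (delta_mx k l) *m L] =
    '[1_n *m delta_mx k l *m 1_p, 1_n *m delta_mx k l *m L]
    + (- 1 / 2) * '[1_n *m delta_mx k l *m 1_p, T *m T^T *m delta_mx k l *m L]
    + (- 1 / 2) * '[1_n *m delta_mx k l *m 1_p, T *m (delta_mx k l)^T *m (T *m L)]
    + (- 1 / 2) * '[S *m S^T *m delta_mx k l *m 1_p, 1_n *m delta_mx k l *m L]
    + 1 / 4 * '[S *m S^T *m delta_mx k l *m 1_p, T *m T^T *m delta_mx k l *m L]
    + 1 / 4 * '[S *m S^T *m delta_mx k l *m 1_p, T *m (delta_mx k l)^T *m (T *m L)]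
    + (- 1 / 2) * '[S *m (delta_mx k l)^T *m S, 1_n *m delta_mx k l *m L]
    + 1 / 4 * '[S *m (delta_mx k l)^T *m S, T *m T^T *m delta_mx k l *m L]
    + 1 / 4 * '[S *m (delta_mx k l)^T *m S, T *m (delta_mx k l)^T *m (T *m L)].
  by rewrite PS PTL !(frob_innerBl, frob_innerBr, frob_innerZl, frob_innerZr); field.
under eq_bigr do under eq_bigr do rewrite expand.
rewrite !sum2_split -!mulr_sum2r !sum_frob_inner_delta !sum_frob_inner_delta_tr.
rewrite !sum_frob_inner_tr_delta sum_frob_inner_tr_tr !frob_inner11 !frob_inner1l.
by rewrite (frob_innerC (S *m S^T)) frob_inner1l !trmx1 !mul1mx; ring.
Qed.

End TangentProjection.

Section TangentDefect.
Variable R : realType.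
Variables n p : nat.
Implicit Types S T : 'M[R]_(n, p).

Lemma stiefel_mxtrace S : stiefel S -> \tr (S *m S^T) = p%:R.
Proof. by move=> SS; rewrite mxtrace_mulC SS mxtrace1. Qed.

Lemma stiefel_frob_inner S : stiefel S -> '[S, S] = p%:R.
Proof. by move=> SS; rewrite /frob_inner SS mxtrace1. Qed.

Lemma sum_tangent_proj_inner_stiefel S T : stiefel S -> stiefel T ->
  \sum_(k < n) \sum_(l < p) '[tangent_proj S (delta_mx k l), tangent_proj T (delta_mx k l)] =
  p%:R * (n%:R - p%:R - 1) + (p%:R + 2) / 4 * '[S^T *m T, S^T *m T]
  + 1 / 4 * '[S, T] ^+ 2.
Proof.
move=> SS TT.
under eq_bigr do under eq_bigr do rewrite -[tangent_proj T _]mulmx1.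
rewrite sum_tangent_proj_inner !mulmx1 mxtrace1 !trmx_mul !trmxK ?mulmxA !mulmx1.
rewrite (stiefel_mxtrace TT) !(stiefel_mxtrace SS).
have STTS : '[S^T *m T, S^T *m T] = \tr (T^T *m S *m S^T *m T).
  by rewrite /frob_inner trmx_mul trmxK !mulmxA.
have SSTT : '[S *m S^T, T *m T^T] = \tr (T^T *m S *m S^T *m T).
  by rewrite /frob_inner trmx_mul trmxK !mulmxA mxtrace_mulC !mulmxA.
have TTSS : \tr (T *m T^T *m S *m S^T) = \tr (T^T *m S *m S^T *m T).
  by rewrite -!mulmxA mxtrace_mulC !mulmxA.
have SSTT' : \tr (S *m S^T *m T *m T^T) = \tr (T^T *m S *m S^T *m T).
  by rewrite mxtrace_mulC !mulmxA.
by rewrite SSTT TTSS SSTT' -STTS; field.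
Qed.

Lemma sum_tangent_proj_inner_mulmx S (L : 'M[R]_p) : stiefel S ->
  \sum_(k < n) \sum_(l < p)
    '[tangent_proj S (delta_mx k l), tangent_proj S (delta_mx k l) *m L] =
  (n%:R - (p%:R + 1) / 2) * \tr L.
Proof.
move=> SS; rewrite sum_tangent_proj_inner !trmx_mul !trmxK (stiefel_mxtrace SS) ?mulmxA.
have SSS : S *m S^T *m S = S by rewrite -mulmxA SS mulmx1.
have trS M : \tr (S *m M *m S^T) = \tr M by rewrite mxtrace_mulC mulmxA SS mul1mx.
have SSSS : '[S *m S^T, S *m S^T] = p%:R.
  by rewrite /frob_inner trmx_mul trmxK !mulmxA SSS stiefel_mxtrace.
have SSL : '[S, S *m L] = \tr L by rewrite /frob_inner mulmxA SS mul1mx.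
by rewrite SSS !trS SSSS stiefel_frob_inner // SSL mxtrace_tr; field.
Qed.

Lemma sqr_mxtrace_le m (M : 'M[R]_m) : (0 < m)%N -> \tr M ^+ 2 <= m%:R * '[M, M].
Proof.
move=> m0; have m0R : 0 < m%:R :> R by rewrite ltr0n.
have := frob_inner_ge0 (M - (\tr M / m%:R) *: 1%:M).
rewrite !(frob_innerBl, frob_innerBr, frob_innerZl, frob_innerZr) frob_inner11.
rewrite (frob_innerC M) frob_inner1l => h; rewrite -subr_ge0.
have -> : m%:R * '[M, M] - \tr M ^+ 2 =
    m%:R * ('[M, M] - \tr M / m%:R * \tr M
            - \tr M / m%:R * (\tr M - \tr M / m%:R * m%:R)).
  by field; rewrite gt_eqF.
exact: mulr_ge0 (ltW m0R) h.
Qed.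

Lemma stiefel_frob_dist S T : stiefel S -> stiefel T ->
  '[S - T, S - T] = 2 * (p%:R - '[S, T]).
Proof.
move=> SS TT; rewrite !(frob_innerBl, frob_innerBr) !stiefel_frob_inner //.
by rewrite (frob_innerC T); ring.
Qed.

Lemma stiefel_frob_inner_le S T : stiefel S -> stiefel T -> '[S, T] <= p%:R.
Proof.
by move=> SS TT; have := frob_inner_ge0 (S - T); rewrite stiefel_frob_dist //; lra.
Qed.

Definition tangent_defect S T := \sum_(k < n) \sum_(l < p)
  ('[tangent_proj S (delta_mx k l), tangent_proj T (delta_mx k l)]
   - '[tangent_proj S (delta_mx k l), tangent_proj S (delta_mx k l) *m (T^T *m S)]).

Lemma tangent_defectE S T : stiefel S -> stiefel T ->
  tangent_defect S T = p%:R * (n%:R - p%:R - 1)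
    + (p%:R + 2) / 4 * '[S^T *m T, S^T *m T] + 1 / 4 * '[S, T] ^+ 2
    - (n%:R - (p%:R + 1) / 2) * '[S, T].
Proof.
move=> SS TT; rewrite /tangent_defect; under eq_bigr do rewrite sumrB.
rewrite sumrB sum_tangent_proj_inner_stiefel // sum_tangent_proj_inner_mulmx //.
by rewrite [\tr _]frob_innerC.
Qed.

Lemma tangent_defect_decomp S T : stiefel S -> stiefel T ->
  4 * p%:R * tangent_defect S T =
  (p%:R + 2) * (p%:R * '[S^T *m T, S^T *m T] - '[S, T] ^+ 2)
  + 2 * (p%:R + 1) * (p%:R - '[S, T]) ^+ 2
  + 2 * p%:R * (p%:R - '[S, T]) * (2 * n%:R - 3 * p%:R - 3).
Proof. by move=> SS TT; rewrite tangent_defectE //; field. Qed.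

Section DefectSign.
Hypotheses (p_gt0 : (0 < p)%N) (np : (3 * (p + 1) <= 2 * n)%N).
Variables (S T : 'M[R]_(n, p)).
Hypotheses (SS : stiefel S) (TT : stiefel T).

Let nonneg_terms :
  [/\ 0 <= (p%:R + 2) * (p%:R * '[S^T *m T, S^T *m T] - '[S, T] ^+ 2),
      0 <= 2 * (p%:R + 1) * (p%:R - '[S, T]) ^+ 2
    & 0 <= 2 * p%:R * (p%:R - '[S, T]) * (2 * n%:R - 3 * p%:R - 3) :> R].
Proof.
have np' : 3 * (p%:R + 1) <= 2 * n%:R :> R.
  by move: np; rewrite -(ler_nat R) !natrM natrD.
have CS : '[S, T] ^+ 2 <= p%:R * '[S^T *m T, S^T *m T] := sqr_mxtrace_le _ p_gt0.
have := stiefel_frob_inner_le SS TT; have : 0 < p%:R :> R by rewrite ltr0n.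
split; first by rewrite mulr_ge0 ?subr_ge0 //; lra.
  by rewrite mulr_ge0 ?sqr_ge0 //; lra.
by rewrite !mulr_ge0 //; lra.
Qed.

Lemma tangent_defect_ge0 : 0 <= tangent_defect S T.
Proof.
have := tangent_defect_decomp SS TT; case: nonneg_terms => a b c.
have p4 : 0 < 4 * p%:R :> R by rewrite mulr_gt0 ?ltr0n.
by rewrite -(pmulr_rge0 _ p4) => ->; rewrite !addr_ge0.
Qed.

Lemma tangent_defect_eq0 : tangent_defect S T = 0 -> S = T.
Proof.
move=> def0; have := tangent_defect_decomp SS TT; rewrite def0 mulr0.
case: nonneg_terms => a b c decomp.
have p1 : 2 * (p%:R + 1) != 0 :> R by rewrite gt_eqF // mulr_gt0 // ltr_wpDl.
have b0 : 2 * (p%:R + 1) * (p%:R - '[S, T]) ^+ 2 = 0 by lra.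
move/eqP: b0; rewrite mulf_eq0 (negbTE p1) sqrf_eq0 subr_eq0 => /eqP STp.
by apply/eqP; rewrite -subr_eq0 -frob_inner_eq0 stiefel_frob_dist // -STp subrr mulr0.
Qed.

End DefectSign.

End TangentDefect.

Section Synchronization.
Variable R : realType.

Lemma wedge_tangent_proj n p (S : 'M[R]_(n, p)) k l : stiefel S ->
  wedge ((1%:M - (1 / 2) *: (S *m S^T)) *m delta_mx k 0) (S *m delta_mx l 0) *m S =
  tangent_proj S (delta_mx k l).
Proof.
move=> SS.
have yS : (S *m delta_mx l (0 : 'I_1))^T *m S = delta_mx 0 l.
  by rewrite trmx_mul -mulmxA SS mulmx1 trmx_delta.
have xS : ((1%:M - (1 / 2) *: (S *m S^T)) *m delta_mx k (0 : 'I_1))^T *m S =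
    (1 / 2) *: (delta_mx 0 k *m S).
  rewrite trmx_mul trmx_delta linearB /= trmx1 linearZ /= trmx_mul trmxK.
  rewrite -mulmxA mulmxBl mul1mx -scalemxAl -mulmxA SS mulmx1.
  have -> : S - (1 / 2) *: S = (1 / 2) *: S.
    by apply/matrixP => i j; rewrite !mxE; field.
  by rewrite scalemxAr.
rewrite /wedge mulmxBl -!mulmxA yS xS /tangent_proj trmx_delta.
rewrite mul_delta_mx -!scalemxAr (mulmxA (delta_mx l 0)) mul_delta_mx.
by rewrite mulmxBl mul1mx -scalemxAl !mulmxA.
Qed.

Lemma local_minimizer_tangent_defect N n p (e : rel 'I_N) (S : 'I_N -> 'M[R]_(n, p)) :
  simple_graph e -> local_minimizer e S ->
  \sum_(u < N) \sum_(v < N | e u v) tangent_defect (S u) (S v) <= 0.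
Proof.
move=> e_simple Smin; have [SS _] := Smin.
rewrite /tangent_defect sum_edges_exchange; apply: sumr_le0 => k _; apply: sumr_le0 => l _.
pose x u : 'cV[R]_n := (1%:M - (1 / 2) *: (S u *m (S u)^T)) *m delta_mx k 0.
pose y u : 'cV[R]_n := S u *m delta_mx l 0.
have [_] := local_minimizer_skew_variation e_simple
  (lam := fun u => '[x u, x u] * '[y u, y u] - '[x u, y u] ^+ 2) Smin
  (fun u => trmx_wedge (x u) (y u)) (fun u => wedge_cube (x u) (y u)).
have proj u : wedge (x u) (y u) *m S u = tangent_proj (S u) (delta_mx k l).
  exact: wedge_tangent_proj.
rewrite second_variation_skew // => [|u|u]; last exact: local_minimizer_nbr_sum.
  by under eq_bigr do under eq_bigr do rewrite !proj.
exact: trmx_wedge.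
Qed.

End Synchronization.

Theorem theorem1 (R : realType) (n p N : nat) (e : rel 'I_N) :
  (0 < n)%N -> (0 < p)%N -> (3 * (p + 1) <= 2 * n)%N ->
  simple_graph e -> graph_connected e ->
  forall S : 'I_N -> 'M[R]_(n, p),
    local_minimizer e S -> consensus e S.
Proof.
move=> _ p_gt0 np e_simple _ S Smin; have [SS _] := Smin.
split=> // i j eij; apply: (tangent_defect_eq0 p_gt0 np (SS i) (SS j)).
apply/eqP; rewrite eq_le tangent_defect_ge0 // andbT.
apply: le_trans (local_minimizer_tangent_defect e_simple Smin).
by apply: le_sum_edges eij => u v; exact: tangent_defect_ge0.
Qed.
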